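(* Every tree is complement critical. Every tree which is not a star is vector critical.
   Context: All graphs are finite and simple with nonempty vertex set; $\overline{G}$ denotes the complement of $G$. A star is a graph $K_{1,m}$. An orthogonal vector representation of a graph $G=(V,E)$ in $\mathbb{R}^d$ is a map $\phi:V\to\mathbb{R}^d$ with $\phi(v)\neq 0$ for all $v$, and for distinct $u,v$: $\langle\phi(u),\phi(v)\rangle=0$ if and only if $uv\notin E$. ${\rm mvr}(G)$ is the smallest $d$ for which such a representation exists. $G$ is vector critical if ${\rm mvr}(H)<{\rm mvr}(G)$ for every proper induced subgraph $H$ of $G$ (with nonempty vertex set). $G$ is complement critical if ${\rm mvr}(H)+{\rm mvr}(\overline{H})<{\rm mvr}(G)+{\rm mvr}(\overline{G})$ for every proper induced subgraph $H$ of $G$ (with nonempty vertex set). *)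

From Stdlib Require Import ClassicalEpsilon.
From mathcomp Require Import all_boot all_order all_algebra.
From mathcomp Require Import Rstruct.

Set Implicit Arguments.
Unset Strict Implicit.
Unset Printing Implicit Defensive.

Import Order.TTheory GRing.Theory Num.Theory.
Local Open Scope ring_scope.

(* A finite simple graph is given by a vertex type T : finType (nonempty)
   and a symmetric irreflexive adjacency relation e : rel T. *)

Definition compl_rel (T : finType) (e : rel T) : rel T :=
  fun u v => (u != v) && ~~ e u v.

Definition dotR (d : nat) (x y : 'rV[Rdefinitions.R]_d) : Rdefinitions.R := \sum_(i < d) x 0 i * y 0 i.

Definition orth_rep (T : finType) (e : rel T) (S : {set T}) (d : nat)
  (phi : T -> 'rV[Rdefinitions.R]_d) : Prop :=
  (forall v, v \in S -> phi v != 0) /\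
  (forall u v, u \in S -> v \in S -> u != v ->
     (dotR (phi u) (phi v) = 0 <-> ~~ e u v)).

Definition has_orth_rep (T : finType) (e : rel T) (S : {set T}) (d : nat) : Prop :=
  exists phi : T -> 'rV[Rdefinitions.R]_d, orth_rep e S phi.

Definition has_orth_rep_b (T : finType) (e : rel T) (S : {set T}) : pred nat :=
  fun d => if excluded_middle_informative (has_orth_rep e S d) then true else false.

(* mvr of the induced subgraph G[S]: the least d admitting an orthogonal
   representation in R^d (such a d always exists; 0 is a dummy fallback). *)
Definition mvr (T : finType) (e : rel T) (S : {set T}) : nat :=
  match excluded_middle_informative (exists d, has_orth_rep_b e S d) with
  | left h => ex_minn h
  | right _ => 0%N
  end.

Definition vector_critical (T : finType) (e : rel T) : Prop :=
  forall S : {set T}, S != set0 -> S \proper [set: T] ->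
    (mvr e S < mvr e [set: T])%N.

Definition complement_critical (T : finType) (e : rel T) : Prop :=
  forall S : {set T}, S != set0 -> S \proper [set: T] ->
    (mvr e S + mvr (compl_rel e) S < mvr e [set: T] + mvr (compl_rel e) [set: T])%N.

Definition is_connected (T : finType) (e : rel T) : Prop :=
  forall u v : T, connect e u v.

Definition is_acyclic (T : finType) (e : rel T) : Prop :=
  forall s : seq T, uniq s -> (3 <= size s)%N -> ~~ cycle e s.

Definition is_tree (T : finType) (e : rel T) : Prop :=
  is_connected e /\ is_acyclic e.

Definition is_star (T : finType) (e : rel T) : Prop :=
  exists c : T, forall u v : T,
    e u v = ((u == c) && (v != c)) || ((v == c) && (u != c)).

(* Root the tree at r.  In an orthogonal representation the vector of a deepest
   leaf is orthogonal to every other vector except that of its parent, so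
   projecting it away and deleting the leaf leaves an orthogonal representation of
   a smaller rooted tree; by induction the n - 1 non-root vectors are linearly
   independent, whence mvr >= n - 1.  Conversely, giving each non-root vertex a
   coordinate and supporting every vertex on itself and its children represents
   any vertex set containing the root and a child of it in dimension one less than
   its size.  Hence deleting a vertex v lowers mvr as soon as some edge avoids v;
   otherwise the tree is a star with centre v, the remaining vertices form a clique
   of the complement (mvr 1), while v and any other vertex are non-adjacent in the
   complement (mvr >= 2). *)

From Stdlib Require Import ClassicalEpsilon.
From mathcomp Require Import all_boot all_order all_algebra.
From mathcomp Require Import Rstruct ring zify.

Set Implicit Arguments.
Unset Strict Implicit.
Unset Printing Implicit Defensive.

Import Order.TTheory GRing.Theory Num.Theory.

Section AcyclicNeighbours.
Variables (T : finType) (e : rel T).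
Hypotheses (e_sym : symmetric e) (e_irr : irreflexive e) (e_acyclic : is_acyclic e).

Definition avoid_rel (w : T) : rel T := [rel x y | [&& e x y, x != w & y != w]].

Lemma avoid_path_notin w x p : path (avoid_rel w) x p -> w \notin p.
Proof.
elim: p x => [|y p IHp] x //= /andP [/and3P [_ _ yw] /IHp].
by rewrite in_cons negb_or eq_sym yw.
Qed.

Lemma acyclic_neighbours_disconnected w a b : a != b -> e w a -> e w b ->
  ~ connect (avoid_rel w) a b.
Proof.
move=> ab ewa ewb /connectP [p avoid_p b_def]; rewrite {b}b_def in ab ewb.
case: (shortenP avoid_p) ewb ab => p' avoid_p' uniq_p' sub_p' ewb ab.
have p'_ne : (0 < size p')%N by case: p' {avoid_p' uniq_p' sub_p' ewb} ab; rewrite ?eqxx.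
have aw : a != w by apply: contraTneq ewa => ->; rewrite e_irr.
have w_notin : w \notin a :: p'.
  by rewrite in_cons eq_sym negb_or aw; apply: contra (avoid_path_notin avoid_p); apply: sub_p'.
have e_p' : path e a p' by apply: sub_path avoid_p' => x y /and3P [].
have := e_acyclic (s := [:: w, a & p']).
rewrite cons_uniq w_notin uniq_p' /= !ltnS p'_ne => /(_ isT isT) /negP; apply.
by rewrite ewa rcons_path e_p' (e_sym _ w) ewb.
Qed.

End AcyclicNeighbours.

Section RootedTree.
Variables (T : finType) (e : rel T).
Hypotheses (e_sym : symmetric e) (e_irr : irreflexive e) (e_conn : is_connected e)
  (e_acyclic : is_acyclic e).
Variable r : T.

Fixpoint ball (k : nat) : {set T} :=
  if k is k'.+1 then ball k' :|: [set y | [exists x in ball k', e x y]] else [set r].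

Lemma ball_edge k x y : x \in ball k -> e x y -> y \in ball k.+1.
Proof.
by move=> xk exy; rewrite /= !inE; apply/orP; right; apply/existsP; exists x; rewrite xk.
Qed.

Lemma ball_last_path k x p : x \in ball k -> path e x p -> last x p \in ball (k + size p).
Proof.
elim: p x k => [|y p IHp] x k /=; first by rewrite addn0.
by move=> xk /andP [exy yp]; rewrite addnS -addSn; apply: IHp yp; apply: ball_edge exy.
Qed.

Lemma ball_exists v : exists k, v \in ball k.
Proof.
have /connectP [p rp ->] := e_conn r v; exists (0 + size p)%N.
by apply: ball_last_path rp; rewrite /= inE.
Qed.

Definition depth (v : T) : nat := ex_minn (ball_exists v).

Lemma ball_depth v : v \in ball (depth v).
Proof. by rewrite /depth; case: ex_minnP. Qed.

Lemma depth_min v k : v \in ball k -> (depth v <= k)%N.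
Proof. by rewrite /depth; case: ex_minnP => m _; apply. Qed.

Lemma depth_eq0 v : (depth v == 0%N) = (v == r).
Proof.
apply/eqP/eqP => [v0|->]; first by have := ball_depth v; rewrite v0 inE => /eqP.
by apply/eqP; rewrite -leqn0 depth_min // inE.
Qed.

Lemma depth_root : depth r = 0%N.
Proof. by apply/eqP; rewrite depth_eq0. Qed.

Lemma exists_shallower_neighbour v : v != r ->
  exists u, e v u && (depth u < depth v)%N.
Proof.
rewrite -depth_eq0 => vr; have := ball_depth v.
case dv: (depth v) vr => [//|k] _; rewrite /= in_setU => /orP [vk|].
  by have := depth_min vk; rewrite dv ltnn.
by rewrite inE => /existsP [x /andP [xk exv]]; exists x; rewrite e_sym exv ltnS depth_min.
Qed.

Definition parent (v : T) : T := odflt v [pick u | e v u && (depth u < depth v)%N].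

Lemma parentP v : v != r -> e v (parent v) && (depth (parent v) < depth v)%N.
Proof.
move=> vr; rewrite /parent; case: pickP => [u //|none].
by have [u] := exists_shallower_neighbour vr; rewrite none.
Qed.

Lemma edge_parent v : v != r -> e v (parent v).
Proof. by move/parentP/andP => []. Qed.

Lemma depth_parent v : v != r -> (depth (parent v) < depth v)%N.
Proof. by move/parentP/andP => []. Qed.

Lemma connect_root_avoid w x : x != w -> (depth x <= depth w)%N ->
  connect (avoid_rel e w) x r.
Proof.
move: {2}(depth x) (leqnn (depth x)) => n; elim: n x => [|n IHn] x.
  by rewrite leqn0 depth_eq0 => /eqP -> *; apply: connect0.
have [-> *|xr dxn xw dxw] := eqVneq x r; first exact: connect0.
have dpx := depth_parent xr.
have pw : parent x != w by apply: contraTneq dpx => ->; rewrite -leqNgt.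
apply: connect_trans (connect1 _) (IHn _ _ pw _); last 2 first.
- by rewrite -ltnS (leq_trans dpx).
- exact: leq_trans (ltnW dpx) dxw.
by apply/and3P; split; rewrite ?edge_parent.
Qed.

Lemma edge_to_deeper u w : e u w -> (depth u <= depth w)%N -> w != r /\ u = parent w.
Proof.
move=> euw duw.
have wr : w != r.
  apply: contraTneq euw => wr; rewrite wr.
  have ur : u = r by apply/eqP; rewrite -depth_eq0 -leqn0 -depth_root -wr.
  by rewrite ur e_irr.
(* Otherwise u and parent w are neighbours of w joined through the root avoiding w. *)
split=> //; apply/eqP/negPn/negP => u_par.
have ewu : e w u by rewrite e_sym.
apply: (acyclic_neighbours_disconnected e_sym e_irr e_acyclic u_par ewu (edge_parent wr)).
have uw : u != w by apply: contraTneq euw => ->; rewrite e_irr.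
have dpw := depth_parent wr.
have pw : parent w != w by apply: contraTneq dpw => ->; rewrite ltnn.
apply: connect_trans (connect_root_avoid uw duw) _.
have avoid_sym : symmetric (avoid_rel e w).
  by move=> x y; rewrite /avoid_rel /= e_sym [(x != w) && _]andbC.
by rewrite sym_connect_sym //; apply: connect_root_avoid pw (ltnW dpw).
Qed.

Lemma edge_parentP u w : e u w -> (w != r /\ u = parent w) \/ (u != r /\ w = parent u).
Proof.
move=> euw; case: (leqP (depth u) (depth w)) => [duw|dwu].
  by left; apply: edge_to_deeper.
by right; apply: edge_to_deeper (ltnW dwu); rewrite e_sym.
Qed.

End RootedTree.

Local Open Scope ring_scope.
Local Notation R := Rdefinitions.R.

Section MinimumVectorRank.
Variables (T : finType) (e : rel T).
Implicit Types (S : {set T}) (d : nat).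

Lemma has_orth_rep_bP S d : reflect (has_orth_rep e S d) (has_orth_rep_b e S d).
Proof. by rewrite /has_orth_rep_b; case: excluded_middle_informative => h; constructor. Qed.

Lemma mvr_min S d : has_orth_rep e S d -> (mvr e S <= d)%N.
Proof.
move=> rep; rewrite /mvr; case: excluded_middle_informative => [ex|[]].
  by case: ex_minnP => m _; apply; apply/has_orth_rep_bP.
by exists d; apply/has_orth_rep_bP.
Qed.

Lemma has_orth_rep_mvr S d : has_orth_rep e S d -> has_orth_rep e S (mvr e S).
Proof.
move=> rep; rewrite /mvr; case: excluded_middle_informative => [ex|[]].
  by case: ex_minnP => m /has_orth_rep_bP.
by exists d; apply/has_orth_rep_bP.
Qed.

Lemma mvr_max S d k : has_orth_rep e S d ->
  (forall d', has_orth_rep e S d' -> (k <= d')%N) -> (k <= mvr e S)%N.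
Proof. by move=> rep; apply; apply: has_orth_rep_mvr rep. Qed.

Lemma has_orth_rep_subset S S' d : S \subset S' ->
  has_orth_rep e S' d -> has_orth_rep e S d.
Proof.
move=> /subsetP sub [phi [phi_nz phi_orth]]; exists phi; split.
  by move=> v /sub; apply: phi_nz.
by move=> u v /sub uS /sub vS; apply: phi_orth.
Qed.

Lemma mvr_subset S S' d : S \subset S' -> has_orth_rep e S' d ->
  (mvr e S <= mvr e S')%N.
Proof.
by move=> sub rep; apply/mvr_min/(has_orth_rep_subset sub); apply: has_orth_rep_mvr rep.
Qed.

End MinimumVectorRank.

Definition indicator_row (K : finType) (P : pred K) : 'rV[R]_#|K| :=
  \row_i (P (enum_val i))%:R.

Lemma indicator_row_neq0 (K : finType) (P : pred K) k : P k -> indicator_row P != 0.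
Proof.
move=> Pk; apply/eqP => /rowP /(_ (enum_rank k)).
by rewrite !mxE enum_rankK Pk; apply/eqP; rewrite oner_eq0.
Qed.

Lemma dotR_indicator_row_eq0 (K : finType) (P Q : pred K) :
  dotR (indicator_row P) (indicator_row Q) = 0 <-> ~~ [exists k, P k && Q k].
Proof.
have terms_ge0 i : true -> 0 <= indicator_row P 0 i * indicator_row Q 0 i.
  by rewrite !mxE => _; apply: mulr_ge0; apply: ler0n.
rewrite negb_exists; split => [zero|/forallP disj].
  apply/forallP => k; have /eqP := psumr_eq0P terms_ge0 zero (i := enum_rank k) isT.
  by rewrite !mxE enum_rankK; case: (P k); case: (Q k); rewrite ?mulr1 ?oner_eq0.
apply: big1 => i _; rewrite !mxE.
by have := disj (enum_val i); case: (P _); case: (Q _); rewrite ?mulr0 ?mul0r.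
Qed.

Lemma has_orth_rep_witnesses (T : finType) (e : rel T) (S : {set T})
    (K : finType) (P : T -> pred K) :
  (forall v, v \in S -> exists k, P v k) ->
  (forall u v, u \in S -> v \in S -> u != v -> e u v = [exists k, P u k && P v k]) ->
  has_orth_rep e S #|K|.
Proof.
move=> witness adj; exists (fun v => indicator_row (P v)); split.
  by move=> v /witness [k]; apply: indicator_row_neq0.
by move=> u v uS vS uv; rewrite dotR_indicator_row_eq0 adj.
Qed.

Lemma has_orth_rep_edges (T : finType) (e : rel T) (S : {set T}) :
  symmetric e -> has_orth_rep e S #|{: T * T}|.
Proof.
move=> e_sym.
(* v owns the coordinate (v, v) and shares the coordinate of every edge at v. *)
pose P v : pred (T * T) := fun x => (x == (v, v)) || e x.1 x.2 && ((x.1 == v) || (x.2 == v)).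
apply: (has_orth_rep_witnesses (P := P)) => [v _|u v _ _ uv].
  by exists (v, v); rewrite /P eqxx.
apply/idP/existsP => [euv|[[x y]]]; first by exists (u, v); rewrite /P /= euv !eqxx !orbT.
rewrite /P /= !xpair_eqE => /andP [Pu Pv].
case/orP: Pu => [/andP [/eqP xu /eqP yu]|/andP [exy xy_u]].
  by move: Pv; rewrite xu yu (negbTE uv) /= andbF.
case/orP: Pv => [/andP [/eqP xv /eqP yv]|/andP [_ xy_v]].
  by move: xy_u; rewrite xv yv eq_sym (negbTE uv).
case/orP: xy_u => /eqP xu; case/orP: xy_v => /eqP yv; move: exy uv;
  by rewrite -xu -yv ?eqxx //= e_sym.
Qed.

Lemma mvr_le_setT (T : finType) (e : rel T) (S : {set T}) :
  symmetric e -> (mvr e S <= mvr e [set: T])%N.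
Proof. by move=> e_sym; apply: mvr_subset (has_orth_rep_edges _ e_sym); apply: subsetT. Qed.

Section DotProduct.
Variable d : nat.
Implicit Types x y z : 'rV[R]_d.

Lemma dotRC x y : dotR x y = dotR y x.
Proof. by apply: eq_bigr => i _; rewrite mulrC. Qed.

Lemma dotRDl x y z : dotR (x + y) z = dotR x z + dotR y z.
Proof. by rewrite /dotR -big_split; apply: eq_bigr => i _; rewrite mxE mulrDl. Qed.

Lemma dotRZl (c : R) x y : dotR (c *: x) y = c * dotR x y.
Proof. by rewrite /dotR mulr_sumr; apply: eq_bigr => i _; rewrite mxE mulrA. Qed.

Lemma dotRNl x y : dotR (- x) y = - dotR x y.
Proof. by rewrite -scaleN1r dotRZl mulN1r. Qed.

Lemma dotR0l y : dotR 0 y = 0.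
Proof. by apply: big1 => i _; rewrite mxE mul0r. Qed.

Lemma dotRR_eq0 x : (dotR x x == 0) = (x == 0).
Proof.
apply/eqP/eqP => [xx0|->]; last exact: dotR0l.
have sq_ge0 (i : 'I_d) : true -> 0 <= x 0 i * x 0 i by rewrite -expr2 sqr_ge0.
apply/rowP => i; have /eqP := psumr_eq0P sq_ge0 xx0 (i := i) isT.
by rewrite mxE mulf_eq0 orbb => /eqP.
Qed.

Definition orth_proj z x := x - (dotR x z / dotR z z) *: z.

Lemma orth_proj0 z : orth_proj z 0 = 0.
Proof. by rewrite /orth_proj dotR0l mul0r scale0r subr0. Qed.

Lemma orth_proj_self z : z != 0 -> orth_proj z z = 0.
Proof. by rewrite -dotRR_eq0 => zz; rewrite /orth_proj divff // scale1r subrr. Qed.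

Lemma orth_projZD z (c : R) x y :
  orth_proj z (c *: x + y) = c *: orth_proj z x + orth_proj z y.
Proof.
rewrite /orth_proj dotRDl dotRZl mulrDl -mulrA scalerDl -scalerA scalerBr.
by rewrite opprD addrACA.
Qed.

Lemma orth_proj_sum z (I : finType) (A : pred I) (a : I -> R) (f : I -> 'rV[R]_d) :
  orth_proj z (\sum_(i in A) a i *: f i) = \sum_(i in A) a i *: orth_proj z (f i).
Proof.
by elim/big_rec2: _ => [|i y1 y2 _ <-]; rewrite ?orth_proj0 ?orth_projZD.
Qed.

Lemma dotR_orth_proj z x y : z != 0 ->
  dotR (orth_proj z x) (orth_proj z y) = dotR x y - dotR x z * dotR y z / dotR z z.
Proof.
rewrite -dotRR_eq0 => zz.
rewrite /orth_proj dotRDl dotRNl dotRZl [dotR x (_ - _)]dotRC [dotR z (_ - _)]dotRC.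
rewrite !dotRDl !dotRNl !dotRZl ?[dotR z x]dotRC ?[dotR z y]dotRC [dotR y x]dotRC.
by field.
Qed.

End DotProduct.

Section ParentFunction.
Variables (T : finType) (e : rel T) (r : T) (par : T -> T) (depth : T -> nat).
Hypotheses (depth_par : forall v, v != r -> (depth (par v) < depth v)%N)
  (edge_par : forall u w, e u w -> (w != r /\ u = par w) \/ (u != r /\ w = par u)).

Lemma par_neq v : v != r -> par v != v.
Proof. by move/depth_par; apply: contraTneq => ->; rewrite ltnn. Qed.

Lemma exists_leaf (S : {set T}) x : x \in S :\ r ->
  exists2 l, l \in S :\ r & forall v, v \in S -> v != r -> par v != l.
Proof.
move=> xS; case: (arg_maxnP depth xS) => l lS l_deepest; exists l => // v vS vr.
by apply: contraTneq (depth_par vr) => ->; rewrite -leqNgt; apply: l_deepest; apply/setD1P.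
Qed.

Lemma leaf_orth (S : {set T}) (d : nat) (psi : T -> 'rV[R]_d) l :
  {in S &, forall u w, u != w -> ~~ e u w -> dotR (psi u) (psi w) = 0} ->
  l \in S -> (forall v, v \in S -> v != r -> par v != l) ->
  forall v, v \in S -> v != l -> v != par l -> dotR (psi v) (psi l) = 0.
Proof.
move=> orth lS leaf v vS vl vp; apply: orth => //.
by apply/negP => /edge_par [[_ /eqP]|[vr /esym /eqP]]; [apply/negP | apply/negP/leaf].
Qed.

Lemma nonroot_coef_eq0 (d n : nat) (S : {set T}) (psi : T -> 'rV[R]_d) (a : T -> R) :
  #|S| = n -> r \in S -> (forall v, v \in S -> v != r -> par v \in S) ->
  {in S &, forall u w, u != w -> ~~ e u w -> dotR (psi u) (psi w) = 0} ->
  (forall v, v \in S -> v != r -> dotR (psi v) (psi (par v)) != 0) ->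
  \sum_(v in S :\ r) a v *: psi v = 0 -> forall v, v \in S :\ r -> a v = 0.
Proof.
elim: n S psi => [|n IHn] S psi cardS rS par_closed orth par_nonorth sum0.
  by have := card0_eq cardS r; rewrite rS.
case: (set_0Vmem (S :\ r)) => [-> v|[x xS]]; first by rewrite inE.
have [l lS leaf] := exists_leaf xS.
have /setD1P [lr {}lS] := lS.
have psi_l : psi l != 0.
  by apply: contraNneq (par_nonorth l lS lr) => ->; rewrite dotR0l.
pose psi' v := orth_proj (psi l) (psi v).
pose S' := S :\ l.
have S'P v : v \in S' -> v != l /\ v \in S by move/setD1P.
have S'_r : S' :\ r = S :\ r :\ l by rewrite !setDDl setUC.
have dot_psi' u w : u \in S' -> w \in S' -> u != w ->
    dotR (psi' u) (psi' w) = dotR (psi u) (psi w).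
  move=> /S'P [ul uS] /S'P [wl wS] uw; rewrite dotR_orth_proj //.
  have [up|up] := eqVneq u (par l).
    by rewrite (leaf_orth orth lS leaf wS wl) ?mulr0 ?mul0r ?subr0 // -up eq_sym.
  by rewrite (leaf_orth orth lS leaf uS ul up) !mul0r subr0.
have par_closed' v : v \in S' -> v != r -> par v \in S'.
  by move=> /S'P [_ vS] vr; rewrite !inE leaf ?par_closed.
have orth' : {in S' &, forall u w, u != w -> ~~ e u w -> dotR (psi' u) (psi' w) = 0}.
  move=> u w uS' wS' uw neuw; have [_ uS] := S'P u uS'; have [_ wS] := S'P w wS'.
  by rewrite dot_psi' ?orth.
have par_nonorth' v : v \in S' -> v != r -> dotR (psi' v) (psi' (par v)) != 0.
  move=> vS' vr; have [_ vS] := S'P v vS'.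
  by rewrite dot_psi' ?par_closed' ?par_nonorth // eq_sym par_neq.
have sum0' : \sum_(v in S' :\ r) a v *: psi' v = 0.
  have := congr1 (orth_proj (psi l)) sum0.
  rewrite orth_proj_sum orth_proj0 (big_setD1 l) ?inE ?lr ?lS //.
  by rewrite /psi' orth_proj_self // scaler0 /= add0r S'_r.
have cardS' : #|S'| = n by move: cardS; rewrite (cardsD1 l) lS => [[]].
have rS' : r \in S' by rewrite !inE eq_sym lr.
have a_rest v : v \in S :\ r :\ l -> a v = 0.
  by rewrite -S'_r; apply: (IHn S' psi' cardS' rS' par_closed' orth' par_nonorth' sum0').
have a_l : a l = 0.
  move/eqP: sum0; rewrite (big_setD1 l) ?inE ?lr ?lS // big1 => [|v /a_rest ->].
    by rewrite /= addr0 scaler_eq0 (negbTE psi_l) orbF => /eqP.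
  by rewrite scale0r.
by move=> v vS; have [->//|vl] := eqVneq v l; apply: a_rest; apply/setD1P.
Qed.

Hypothesis par_edge : forall v, v != r -> e v (par v).

Lemma orth_rep_dim_ge d : has_orth_rep e [set: T] d -> (#|T|.-1 <= d)%N.
Proof.
move=> [phi [phi_nz phi_orth]].
pose A := [set: T] :\ r.
have cardA : #|A| = #|T|.-1 by rewrite -cardsT (cardsD1 r [set: T]) in_setT.
pose M : 'M[R]_(#|A|, d) := \matrix_(i, j) phi (enum_val i) 0 j.
suff : row_free M by rewrite -row_leq_rank -cardA => /leq_trans; apply; apply: rank_leq_col.
apply: inj_row_free => c cM0.
have [A0|[x0 x0A]] := set_0Vmem A.
  by apply/rowP => i; have := ltn_ord i; rewrite {2}A0 cards0.
pose a x := c 0 (enum_rank_in x0A x).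
have sum0 : \sum_(x in A) a x *: phi x = 0.
  rewrite big_enum_val; apply: etrans cM0; rewrite mulmx_sum_row; apply: eq_bigr => i _.
  by rewrite /a enum_valK_in; congr (_ *: _); apply/rowP => j; rewrite !mxE.
have orth : {in [set: T] &, forall u w, u != w -> ~~ e u w -> dotR (phi u) (phi w) = 0}.
  by move=> u w uT wT uw /(phi_orth u w uT wT uw).
have par_nonorth v : v \in [set: T] -> v != r -> dotR (phi v) (phi (par v)) != 0.
  move=> vT vr; apply/eqP => /(phi_orth v (par v) vT (in_setT _)).
  by rewrite eq_sym par_neq // par_edge // => /(_ isT).
have := nonroot_coef_eq0 erefl (in_setT r) (fun _ _ _ => in_setT _) orth par_nonorth sum0.
by move=> a0; apply/rowP => i; rewrite mxE -(a0 _ (enum_valP i)) /a enum_valK_in.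
Qed.

Hypothesis e_sym : symmetric e.

Lemma has_orth_rep_card_nonroot (S : {set T}) c :
  r \in S -> c \in S -> c != r -> par c = r -> has_orth_rep e S #|S|.-1.
Proof.
move=> rS cS cr par_c.
pose K := {x : T | x \in S :\ r}.
have -> : #|S|.-1 = #|{: K}| by rewrite card_sig (cardsD1 r S) rS.
pose P u : pred K := fun k => (val k == u) || (par (val k) == u).
have nonroot x : x \in S -> x != r -> x \in S :\ r by move=> xS xr; apply/setD1P.
apply: (has_orth_rep_witnesses (P := P)) => [u uS|u w uS wS uw].
  have [ur|ur] := eqVneq u r; last by exists (exist _ u (nonroot u uS ur)); rewrite /P eqxx.
  by exists (exist _ c (nonroot c cS cr)); rewrite /P /= par_c ur eqxx orbT.
apply/idP/existsP => [/edge_par [[wr ->]|[ur ->]]|[[x xA]]].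
- by exists (exist _ w (nonroot w wS wr)); rewrite /P /= !eqxx orbT.
- by exists (exist _ u (nonroot u uS ur)); rewrite /P /= !eqxx orbT.
have /setD1P [xr _] := xA.
rewrite /P /= => /andP [/orP [] /eqP xu /orP [] /eqP xw]; move: uw; rewrite -xu -xw ?eqxx //.
- by rewrite par_edge.
- by rewrite e_sym par_edge.
Qed.

End ParentFunction.

Section SmallDimension.
Variables (T : finType) (e : rel T) (S : {set T}).

Lemma has_orth_rep_clique : {in S &, forall u w, u != w -> e u w} -> has_orth_rep e S 1.
Proof.
move=> clique; exists (fun=> const_mx 1); split=> [v _|u w uS wS uw].
  by apply/eqP => /rowP /(_ 0); rewrite !mxE; apply/eqP; rewrite oner_eq0.
rewrite /dotR big_ord1 !mxE mulr1 clique //; split=> // /eqP.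
by rewrite oner_eq0.
Qed.

Lemma orth_rep_dim_ge2 d u w : has_orth_rep e S d ->
  u \in S -> w \in S -> u != w -> ~~ e u w -> (2 <= d)%N.
Proof.
move=> [phi [phi_nz phi_orth]] uS wS uw /(phi_orth u w uS wS uw) uw_orth.
have := phi_nz u uS; have := phi_nz w wS.
case: d phi {phi_nz phi_orth} uw_orth => [|[|d]] phi // uw_orth.
  by rewrite (thinmx0 (phi w)) eqxx.
move: uw_orth; rewrite /dotR big_ord1 => /eqP; rewrite mulf_eq0.
case/orP => /eqP zero; [move=> _ |]; move=> /negP []; apply/eqP/matrixP => i j;
  by rewrite !ord1 zero mxE.
Qed.

End SmallDimension.

Lemma compl_rel_sym (T : finType) (e : rel T) : symmetric e -> symmetric (compl_rel e).
Proof. by move=> e_sym x y; rewrite /compl_rel eq_sym e_sym. Qed.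

Section Tree.
Variables (T : finType) (e : rel T).
Hypotheses (e_sym : symmetric e) (e_irr : irreflexive e) (e_tree : is_tree e).

Lemma tree_mvr_ge : (#|T|.-1 <= mvr e [set: T])%N.
Proof.
have [e_conn e_acyclic] := e_tree.
case: (pickP (@predT T)) => [r _|T0]; last by rewrite (eq_card0 T0).
apply: (mvr_max (has_orth_rep_edges [set: T] e_sym)) => d.
exact: (orth_rep_dim_ge (depth_parent e_sym e_conn (r := r))
  (edge_parentP e_sym e_irr e_conn e_acyclic r) (edge_parent e_sym e_conn (r := r))).
Qed.

Lemma tree_mvr_lt_avoiding_edge u w v (S : {set T}) : e u w -> u != v -> w != v ->
  S \subset [set~ v] -> (mvr e S < mvr e [set: T])%N.
Proof.
have [e_conn e_acyclic] := e_tree.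
move=> euw uv wv S_v.
have edge_par := edge_parentP e_sym e_irr e_conn e_acyclic u.
have [[wu par_w]|[uu _]] := edge_par _ _ euw; last by rewrite eqxx in uu.
have rep := has_orth_rep_card_nonroot edge_par (edge_parent e_sym e_conn (r := u)) e_sym
  (S := [set~ v]) (c := w).
rewrite !in_setC1 uv wv cardsC1 in rep.
have {}rep := has_orth_rep_subset S_v (rep isT isT wu (esym par_w)).
have card_ge2 : (2 <= #|T|)%N.
  by have := subset_leq_card (subsetT [set u; w]); rewrite cards2 cardsT eq_sym wu.
by have := mvr_min rep; have := tree_mvr_ge; lia.
Qed.

Section EdgesThroughVertex.
Variable v : T.
Hypothesis edges_at_v : forall x y, e x y -> (x == v) || (y == v).

Lemma edge_to_center w : w != v -> e w v.
Proof.
have [e_conn _] := e_tree.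
move=> wv; have /connectP [[|x p] /= wp v_last] := e_conn w v.
  by rewrite v_last eqxx in wv.
have /andP [ewx _] := wp; have := edges_at_v ewx.
by rewrite (negbTE wv) /= => /eqP x_v; rewrite -x_v.
Qed.

Lemma is_star_center : is_star e.
Proof.
exists v => x y; have [->|xv] := eqVneq x v; have [->|yv] := eqVneq y v.
- by rewrite e_irr.
- by rewrite e_sym edge_to_center.
- by rewrite edge_to_center.
by apply/negbTE/negP => /edges_at_v; rewrite (negbTE xv) (negbTE yv).
Qed.

Lemma compl_mvr_lt_center (S : {set T}) : S != set0 -> S \subset [set~ v] ->
  (mvr (compl_rel e) S < mvr (compl_rel e) [set: T])%N.
Proof.
move=> /set0Pn [w wS] /subsetP S_v.
have clique : {in S &, forall x y, x != y -> compl_rel e x y}.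
  move=> x y xS yS xy; rewrite /compl_rel xy /=; apply/negP => /edges_at_v.
  by have := S_v x xS; have := S_v y yS; rewrite !in_setC1 => /negbTE -> /negbTE ->.
apply: leq_ltn_trans (mvr_min (has_orth_rep_clique clique)) _.
apply: (mvr_max (has_orth_rep_edges _ (compl_rel_sym e_sym))) => d rep.
have wv : w != v by rewrite -in_setC1 S_v.
apply: (orth_rep_dim_ge2 rep (in_setT v) (in_setT w)); first by rewrite eq_sym.
by rewrite /compl_rel negb_and negbK e_sym edge_to_center ?orbT.
Qed.

End EdgesThroughVertex.

Lemma tree_mvr_lt_or_star (S : {set T}) : S != set0 -> S \proper [set: T] ->
  (mvr e S < mvr e [set: T])%N \/
  (mvr (compl_rel e) S < mvr (compl_rel e) [set: T])%N /\ is_star e.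
Proof.
move=> S_nonempty /proper_subn /subsetPn [v _ vS].
have S_v : S \subset [set~ v].
  by apply/subsetP => x xS; rewrite in_setC1; apply: contraNneq vS => <-.
case: (boolP [exists x, exists y, [&& x != v, y != v & e x y]]) => [|no_edge].
  move=> /existsP [x /existsP [y /and3P [xv yv exy]]].
  by left; apply: tree_mvr_lt_avoiding_edge exy xv yv S_v.
have edges_at_v x y : e x y -> (x == v) || (y == v).
  move=> exy; apply: contraNT no_edge; rewrite negb_or => /andP [xv yv].
  by apply/existsP; exists x; apply/existsP; exists y; rewrite xv yv.
right; split; last exact: is_star_center edges_at_v.
exact: (compl_mvr_lt_center edges_at_v S_nonempty S_v).
Qed.

End Tree.

Theorem proposition5p2 (T : finType) (e : rel T) :
  symmetric e -> irreflexive e -> (0 < #|T|)%N -> is_tree e ->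
  complement_critical e /\ (~ is_star e -> vector_critical e).
Proof.
move=> e_sym e_irr _ e_tree.
have dichotomy := tree_mvr_lt_or_star e_sym e_irr e_tree.
split=> [S S0 SP|not_star S S0 SP]; last by case: (dichotomy S S0 SP) => [//|[_ /not_star]].
have := mvr_le_setT S e_sym; have := mvr_le_setT S (compl_rel_sym e_sym).
by case: (dichotomy S S0 SP) => [|[]]; lia.
Qed.
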